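(* Let $0<R\le\infty$ and let $\varphi$ be a quasiconcave function on $[0,R)$. Then: (i) there is $C>0$ such that $(S_\varphi f)^{**}(t)\le C\,S_\varphi(f^{**})(t)$ for all measurable $f$ on $(0,R)$ and all $t\in(0,R)$ if and only if $\varphi$ satisfies the $B$-condition; (ii) there is $C>0$ such that $S_\varphi(f^{**})(t)\le C\,S_\varphi f(t)$ for all measurable $f$ on $(0,R)$ and all $t\in(0,R)$ if and only if $\varphi$ satisfies the $B$-condition.
   Context: For a measurable a.e. finite function $f$ on $(0,R)$, $f^*$ is its non-increasing rearrangement, $f^*(t)=\inf\{\lambda>0: |\{x:|f(x)|>\lambda\}|\le t\}$, and $f^{**}(t)=\frac1t\int_0^t f^*(s)\,ds$. A function $\varphi\colon[0,R)\to[0,\infty)$ is quasiconcave if $\varphi(t)=0$ iff $t=0$, $\varphi$ is non-decreasing, and $\varphi(t)/t$ is non-increasing on $(0,R)$. It satisfies the $B$-condition if there is $C>0$ with $\frac1t\int_0^t \frac{ds}{\varphi(s)}\le \frac{C}{\varphi(t)}$ for all $t\in(0,R)$. $S_\varphi f(t)=\frac{1}{\varphi(t)}\sup_{0<s<t}\varphi(s)f^*(s)$, $t\in(0,R)$; $S_\varphi(f^{**})$ is $S_\varphi$ applied to the function $f^{**}$. *)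

From mathcomp Require Import all_boot all_order all_algebra.
From mathcomp Require Import all_classical all_reals all_analysis measurable_realfun.
Import Order.TTheory GRing.Theory Num.Theory.

Set Implicit Arguments.
Unset Strict Implicit.
Unset Printing Implicit Defensive.

Local Open Scope classical_set_scope.
Local Open Scope ring_scope.
Local Open Scope ereal_scope.

Section Defs.
Variable R : realType.

Definition dom (Rb : \bar R) : set R := [set x : R | (0 < x)%R /\ x%:E < Rb].

Definition distrib (Rb : \bar R) (g : R -> \bar R) (lam : R) : \bar R :=
  (@lebesgue_measure R) (dom Rb `&` [set x | lam%:E < `|g x|]).

Definition rearr (Rb : \bar R) (g : R -> \bar R) (t : R) : \bar R :=
  ereal_inf [set lam%:E | lam in [set lam : R | (0 < lam)%R /\ distrib Rb g lam <= t%:E]].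

Definition dstar (Rb : \bar R) (g : R -> \bar R) (t : R) : \bar R :=
  (t^-1)%:E * \int[@lebesgue_measure R]_(s in `]0%R, t[) rearr Rb g s.

Definition Sphi (Rb : \bar R) (phi : R -> R) (g : R -> \bar R) (t : R) : \bar R :=
  ((phi t)^-1)%:E * ereal_sup [set (phi s)%:E * rearr Rb g s | s in `]0%R, t[].

Definition quasiconcave (Rb : \bar R) (phi : R -> R) : Prop :=
  [/\ (forall t : R, (0 <= t)%R -> t%:E < Rb -> (phi t = 0%R <-> t = 0%R)),
      (forall t : R, (0 <= t)%R -> t%:E < Rb -> (0 <= phi t)%R),
      (forall s t : R, (0 <= s)%R -> (s <= t)%R -> t%:E < Rb -> (phi s <= phi t)%R) &
      (forall s t : R, (0 < s)%R -> (s <= t)%R -> t%:E < Rb -> (phi t / t <= phi s / s)%R)].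

Definition Bcond (Rb : \bar R) (phi : R -> R) : Prop :=
  exists C : R, (0 < C)%R /\ forall t : R, dom Rb t ->
    (t^-1)%:E * \int[@lebesgue_measure R]_(s in `]0%R, t[) ((phi s)^-1)%:E
      <= (C / phi t)%:E.

Definition admissible (Rb : \bar R) (f : R -> \bar R) : Prop :=
  measurable_fun (dom Rb) f /\
  {ae @lebesgue_measure R, forall x, dom Rb x -> f x \is a fin_num}.

End Defs.

From mathcomp Require Import all_boot all_order all_algebra.
From mathcomp Require Import all_classical all_reals all_analysis measurable_realfun.
From mathcomp Require Import ring.
Import Order.TTheory GRing.Theory Num.Theory.
Local Open Scope classical_set_scope.
Local Open Scope ring_scope.
Local Open Scope ereal_scope.

(* Write S_phi g = M g / phi with M g t = sup_{0<s<t} phi(s) g^*(s) (this is [Mphi]).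
   As phi is nondecreasing and phi(t)/t nonincreasing, S_phi g and g^** are nonincreasing
   while t S_phi g(t) and t g^**(t) are nondecreasing, and such functions are their own
   rearrangements.  Hence (S_phi g)^* and g^* are at most M g(t)/phi on (0,t), and
   averaging 1/phi with the B-condition gives (S_phi g)^**(t) <= C M g(t)/phi(t) and
   g^**(s) <= C M g(t)/phi(s) for s < t.  This is (ii), and also (i) because
   S_phi g <= S_phi g^**; the constant is the one of the B-condition.
   Conversely, 1/phi is its own rearrangement with S_phi (1/phi) <= 1/phi, so (ii) applied
   to it is the B-condition.  For (i), the indicator chi of (0,a) has
   S_phi chi^** <= phi(a)/phi and S_phi chi >= phi(a)/phi on [a,R), which bounds
   int_a^t 1/phi by C t/phi(t) uniformly in a; let a -> 0 by monotone convergence. *)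

Section lebesgue_measure_facts.
Context {R : realType}.
Local Notation mu := (@lebesgue_measure R).

Lemma le_lebesgue_measure (A B : set R) : A `<=` B -> mu A <= mu B.
Proof.
move=> AB; rewrite /lebesgue_measure /lebesgue_stieltjes_measure /measure_extension.
exact: le_outer_measure.
Qed.

Lemma lebesgue_measure_itv_bnd_bnd (a b : R) (x y : bool) : (a <= b)%R ->
  mu [set` Interval (BSide x a) (BSide y b)] = (b - a)%:E.
Proof.
move=> ab; rewrite lebesgue_measure_itv /=.
case: ltP => [_|ba]; first by rewrite -EFinD.
suff -> : b = a by rewrite subrr.
by apply/le_anti; rewrite ab andbT -lee_fin.
Qed.

Lemma nonincreasing_measurable_in (D : set R) (f : R -> \bar R) : is_interval D ->
  (forall x y, D x -> D y -> (x <= y)%R -> f y <= f x) -> measurable_fun D f.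
Proof.
move=> iD fni mD.
apply: (measurability _ (ErealGenOInfty.measurableE R)) => //.
move=> /= _ [_ [r ->]] <-; apply: is_interval_measurable.
move=> x y [Dx fx] [Dy fy] z /andP[xz zy].
have Dz : D z by apply: (iD x y) => //; rewrite xz zy.
split => //=; rewrite /= in_itv /= andbT in fy *.
by rewrite in_itv /= andbT; apply: (lt_le_trans fy); apply: fni.
Qed.

Lemma ge0_integral_itv_oo_ub (f : R -> \bar R) (t : R) (B : \bar R) : (0 < t)%R ->
  measurable_fun `]0%R, t[ f -> (forall x, `]0%R, t[%classic x -> 0 <= f x) ->
  (forall a, (0 < a)%R -> (a < t)%R -> \int[mu]_(x in `[a, t[) f x <= B) ->
  \int[mu]_(x in `]0%R, t[) f x <= B.
Proof.
move=> t0 mf f0 fB; pose F n := `[(t / n.+2%:R)%R, t[%classic.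
have Fp n : (0 < t / n.+2%:R)%R by rewrite divr_gt0 // ltr0n.
have Ft n : (t / n.+2%:R < t)%R by rewrite ltr_pdivrMr ?ltr0n // ltr_pMr // ltr1n.
have sub n : F n `<=` `]0%R, t[%classic by apply: subset_itvr; rewrite bnd_simp.
have nd : {homo F : n m / (n <= m)%N >-> (n <= m)%O}.
  move=> n m nm; rewrite subsetEset; apply: subset_itvr; rewrite bnd_simp.
  by rewrite ler_wpM2l ?(ltW t0) // lef_pV2 ?posrE ?ltr0n // ler_nat ltnS ltnS.
have UF : \bigcup_n F n = `]0%R, t[%classic.
  apply/seteqP; split; first by move=> u [n _ /sub].
  move=> u; rewrite /= in_itv /= => /andP[u0 ut].
  exists (Num.truncn (t / u)) => //; rewrite /F /= in_itv /= ut andbT.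
  rewrite ler_pdivrMr ?ltr0n // mulrC -ler_pdivrMr //.
  by apply: le_trans (ltW (truncnS_gt _)) _; rewrite ler_nat.
have := @ge0_nondecreasing_set_cvg_integral _ (measurableTypeR R) _ F f mu nd
  (fun n => measurable_itv _) (fun n => measurable_funS (measurable_itv _) (sub n) mf)
  (fun n x Fx => f0 x (sub n x Fx)).
rewrite UF => cvgF; rewrite -(cvg_lim (@ereal_hausdorff R) cvgF).
by apply: lime_le; [exact: cvgP cvgF | apply: nearW => n; exact: fB].
Qed.

End lebesgue_measure_facts.

Lemma lee_mul_near1 {R : realFieldType} (k0 : R) (c x : \bar R) : (k0 < 1)%R -> 0 <= c ->
  (forall k, (k0 < k < 1)%R -> k%:E * c <= x) -> c <= x.
Proof.
move=> k01 c0 H; apply/lee_mul01Pr => // k /andP[_ k1].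
have [m0 m1] := midf_lt k01.
have k'1 : (k0 < Num.max k ((k0 + 1) / 2) < 1)%R by rewrite lt_max m0 orbT gt_max k1 m1.
apply: le_trans (H _ k'1); apply: lee_wpmul2r => //.
by rewrite lee_fin le_max lexx.
Qed.

Section domain.
Context {R : realType} {Rb : \bar R}.

Lemma dom_down {s t : R} : dom Rb t -> (0 < s)%R -> (s <= t)%R -> dom Rb s.
Proof. by move=> [t0 tRb] s0 st; split => //; apply: le_lt_trans tRb; rewrite lee_fin. Qed.

Lemma dom_up {s : R} : dom Rb s -> exists t, (s < t)%R /\ t%:E <= Rb.
Proof.
case=> s0; case: Rb => [r| |] //= sr.
- by exists r; split => //; rewrite -lte_fin.
- by exists (s + 1)%R; split; [rewrite ltrDl ltr01 | exact: leey].
Qed.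

Lemma dom_is_interval : is_interval (dom Rb).
Proof.
move=> x y [x0 xRb] [y0 yRb] z /andP[xz zy]; split; first exact: lt_le_trans xz.
by apply: le_lt_trans yRb; rewrite lee_fin.
Qed.

Lemma measurable_dom : measurable (dom Rb).
Proof. by apply: is_interval_measurable; exact: dom_is_interval. Qed.

Lemma itv_sub_dom {t : R} : dom Rb t -> `]0%R, t[ `<=` dom Rb.
Proof. by move=> dt x; rewrite /= in_itv /= => /andP[x0 /ltW]; exact: dom_down dt x0. Qed.

End domain.

Section rearrangement.
Context {R : realType} {Rb : \bar R}.
Local Notation mu := (@lebesgue_measure R).
Implicit Types (g h : R -> \bar R) (s t : R).

Lemma rearr_ge0 g t : 0 <= rearr Rb g t.
Proof. by apply: le_ereal_inf_tmp => _ [lam [lam0 _] <-]; rewrite lee_fin ltW. Qed.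

Lemma rearr_nonincr g s t : (s <= t)%R -> rearr Rb g t <= rearr Rb g s.
Proof.
move=> st; apply: ereal_inf_le_tmp => _ [lam [lam0 hl] <-].
by exists lam => //; split => //; apply: (le_trans hl); rewrite lee_fin.
Qed.

Lemma rearr_le g s c : (0 < s)%R -> 0 <= c ->
  (forall x, dom Rb x -> (s <= x)%R -> `|g x| <= c) -> rearr Rb g s <= c.
Proof.
move=> s0; case: c => [r| |] // r0 gr; last exact: leey.
apply/lee_addgt0Pr => e e0; apply: ge_ereal_inf; exists (r + e)%R%:E; last by rewrite EFinD.
exists (r + e)%R; split; first by rewrite ltr_wpDl // -lee_fin.
rewrite /distrib; apply: (le_trans (@le_lebesgue_measure _ _ `]0%R, s[ _)).
  move=> x [[x0 xRb] /= lx]; rewrite /= in_itv /= x0 /= ltNge; apply/negP => sx.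
  have := lt_le_trans lx (gr x (conj x0 xRb) sx).
  by rewrite lte_fin ltNge lerDl ltW.
by rewrite lebesgue_measure_itv_bnd_bnd ?subr0 // ltW.
Qed.

Lemma rearr_ge g s s' c : (0 <= s)%R -> (s < s')%R -> s'%:E <= Rb ->
  (forall x, (0 < x)%R -> (x < s')%R -> c <= `|g x|) -> c <= rearr Rb g s.
Proof.
move=> s0 ss' s'Rb gc; apply: le_ereal_inf_tmp => _ [lam [lam0 hl] <-].
rewrite leNgt; apply/negP => lc.
have : mu `]0%R, s'[ <= distrib Rb g lam.
  apply: le_lebesgue_measure => x /=; rewrite in_itv /= => /andP[x0 xs']; split.
    by split => //; apply: (lt_le_trans _ s'Rb); rewrite lte_fin.
  exact: (lt_le_trans lc (gc x x0 xs')).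
rewrite lebesgue_measure_itv_bnd_bnd ?subr0 ?(ltW (le_lt_trans s0 ss')) //.
by move=> /le_trans /(_ hl); rewrite lee_fin leNgt ss'.
Qed.

Lemma measurable_rearr g (D : set R) : measurable_fun D (rearr Rb g).
Proof.
move=> mD; apply: (measurable_funS measurableT (@subsetT _ D)) => //.
by apply: nonincreasing_measurable_in => // x y _ _; exact: rearr_nonincr.
Qed.

(* The last hypothesis makes [h] right-continuous, which is all a nonincreasing
   function needs to coincide with its rearrangement. *)
Lemma rearr_id h u :
  (forall x, dom Rb x -> 0 <= h x) ->
  (forall x y, (0 < x)%R -> (x <= y)%R -> dom Rb y -> h y <= h x) ->
  (forall x y, (0 < x)%R -> (x <= y)%R -> dom Rb y -> x%:E * h x <= y%:E * h y) ->
  dom Rb u -> rearr Rb h u = h u.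
Proof.
move=> h0 hni hmul du; have [u0 _] := du.
apply/le_anti/andP; split.
  apply: rearr_le => //; first exact: h0.
  by move=> x dx ux; rewrite gee0_abs ?h0 //; exact: hni.
have [t [ut tRb]] := dom_up du; have t0 := lt_trans u0 ut.
apply: (@lee_mul_near1 _ (u / t)); [by rewrite ltr_pdivrMr ?mul1r | exact: h0 |].
move=> k /andP[uk k1]; have k0 : (0 < k)%R by apply: lt_trans uk; rewrite divr_gt0.
have uuk : (u < u / k)%R by rewrite ltr_pdivlMr // gtr_pMr.
have ukt : (u / k < t)%R by rewrite ltr_pdivrMr // mulrC -ltr_pdivrMr.
have duk : dom Rb (u / k)%R by split; [exact: lt_trans uuk | apply: lt_le_trans tRb].
apply: (@rearr_ge _ u (u / k)%R) => [|//||x x0 xuk]; first exact: ltW.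
  by apply: le_trans tRb; rewrite lee_fin ltW.
rewrite gee0_abs; last exact: h0 (dom_down duk x0 (ltW xuk)).
apply: le_trans (hni _ _ x0 (ltW xuk) duk).
have -> : k%:E * h u = ((u / k)^-1)%:E * (u%:E * h u).
  by rewrite muleA -EFinM invf_div divfK // gt_eqF.
by rewrite lee_pdivrMl ?divr_gt0 //; exact: hmul u0 (ltW uuk) duk.
Qed.

End rearrangement.

Definition int_rearr {R : realType} (Rb : \bar R) (g : R -> \bar R) (t : R) : \bar R :=
  \int[@lebesgue_measure R]_(s in `]0%R, t[) rearr Rb g s.

Section average.
Context {R : realType} {Rb : \bar R} (g : R -> \bar R).
Local Notation mu := (@lebesgue_measure R).
Local Notation I := (int_rearr Rb g).
Implicit Types s t : R.

Lemma dstarE t : dstar Rb g t = (t^-1)%:E * I t.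
Proof. by []. Qed.

Lemma int_rearr_ge0 t : 0 <= I t.
Proof. by apply: integral_ge0 => x _; exact: rearr_ge0. Qed.

Lemma int_rearr_nondecr s t : (s <= t)%R -> I s <= I t.
Proof.
move=> st; apply: ge0_subset_integral => //; first exact: measurable_rearr.
  by move=> x _; exact: rearr_ge0.
by apply: subset_itvl; rewrite bnd_simp.
Qed.

Lemma int_rearr_ge t : (0 < t)%R -> t%:E * rearr Rb g t <= I t.
Proof.
move=> t0; have -> : t%:E = mu `]0%R, t[ by rewrite lebesgue_measure_itv_bnd_bnd ?subr0 // ltW.
rewrite muleC -integral_cst //; apply: ge0_le_integral => //.
- by move=> x _; exact: rearr_ge0.
- exact: measurable_rearr.
- by move=> x; rewrite /= in_itv /= => /andP[_ /ltW]; exact: rearr_nonincr.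
Qed.

Lemma int_rearr_split s t : (0 < s)%R -> (s <= t)%R ->
  I t <= I s + (t - s)%:E * rearr Rb g s.
Proof.
move=> s0 st; rewrite /int_rearr (@itv_bndbnd_setU _ _ _ (BLeft s)) ?bnd_simp //.
rewrite ge0_integral_setU //.
- apply: leeD2l; rewrite -(@lebesgue_measure_itv_bnd_bnd _ _ _ true true st) muleC.
  rewrite -integral_cst //.
  apply: ge0_le_integral => //.
  + by move=> x _; exact: rearr_ge0.
  + exact: measurable_rearr.
  + by move=> x; rewrite /= in_itv /= => /andP[sx _]; exact: rearr_nonincr.
- exact: measurable_rearr.
- by move=> x _; exact: rearr_ge0.
- apply/disj_setPS => x [] /=; rewrite !in_itv /= => /andP[_ xs] /andP[sx _].
  by move: (lt_le_trans xs sx); rewrite ltxx.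
Qed.

Lemma dstar_ge0 t : (0 < t)%R -> 0 <= dstar Rb g t.
Proof. by move=> t0; rewrite mule_ge0 ?int_rearr_ge0 // lee_fin invr_ge0 ltW. Qed.

Lemma mul_dstar t : (0 < t)%R -> t%:E * dstar Rb g t = I t.
Proof. by move=> t0; rewrite muleA -EFinM divff ?gt_eqF ?mul1e. Qed.

Lemma rearr_le_dstar t : (0 < t)%R -> rearr Rb g t <= dstar Rb g t.
Proof.
by move=> t0; rewrite -(@lee_pmul2l _ t%:E) ?lte_fin // mul_dstar // int_rearr_ge.
Qed.

Lemma dstar_nonincr s t : (0 < s)%R -> (s <= t)%R -> dstar Rb g t <= dstar Rb g s.
Proof.
move=> s0 st; have t0 := lt_le_trans s0 st.
rewrite dstarE lee_pdivrMl //; apply: le_trans (int_rearr_split _ _ s0 st) _.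
have -> : t%:E = s%:E + (t - s)%:E by rewrite -EFinD addrC subrK.
rewrite ge0_muleDl ?lee_fin ?subr_ge0 ?(ltW s0) // mul_dstar //.
by apply: leeD2l; apply: lee_wpmul2l (rearr_le_dstar _ s0); rewrite lee_fin subr_ge0.
Qed.

Lemma rearr_dstar t : dom Rb t -> rearr Rb (dstar Rb g) t = dstar Rb g t.
Proof.
apply: rearr_id => [x [x0 _]|x y x0 xy _|x y x0 xy _]; first exact: dstar_ge0.
  exact: dstar_nonincr.
by rewrite !mul_dstar ?(lt_le_trans x0 xy) //; exact: int_rearr_nondecr.
Qed.

End average.

Definition Mphi {R : realType} (Rb : \bar R) (phi : R -> R) (g : R -> \bar R) (t : R) :=
  ereal_sup [set (phi s)%:E * rearr Rb g s | s in `]0%R, t[].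

Section quasiconcave_phi.
Context {R : realType} {Rb : \bar R} {phi : R -> R}.
Hypothesis qc : quasiconcave Rb phi.
Local Notation dom := (dom Rb).
Local Notation mu := (@lebesgue_measure R).
Local Notation inv_phi := (fun u => ((phi u)^-1)%:E).
Implicit Types (g : R -> \bar R) (s t u : R).

Lemma phi_gt0 {t} : dom t -> (0 < phi t)%R.
Proof.
case: qc => phi0 phi_ge0 _ _ [t0 tRb]; rewrite lt_def phi_ge0 ?ltW // andbT.
by apply/eqP => /(phi0 t (ltW t0) tRb) te; move: t0; rewrite te ltxx.
Qed.

Lemma phi_nondecr {s t} : dom t -> (0 < s)%R -> (s <= t)%R -> (phi s <= phi t)%R.
Proof. by case: qc => _ _ phi_nd _ [_ tRb] s0 st; exact: phi_nd (ltW s0) st tRb. Qed.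

Lemma phi_qc {s t} : dom t -> (0 < s)%R -> (s <= t)%R -> (phi t * s <= phi s * t)%R.
Proof.
case: qc => _ _ _ phi_div [t0 tRb] s0 st; have := phi_div s t s0 st tRb.
by rewrite ler_pdivrMr // mulrAC ler_pdivlMr.
Qed.

Lemma phi_scale {k t} : dom t -> (0 < k)%R -> (k <= 1)%R -> (k * phi t <= phi (k * t))%R.
Proof.
move=> dt k0 k1; have [t0 _] := dt; have kt0 : (0 < k * t)%R by rewrite mulr_gt0.
have ktt : (k * t <= t)%R by rewrite ger_pMl.
by have := phi_qc dt kt0 ktt; rewrite mulrA [(phi t * k)%R]mulrC ler_pM2r.
Qed.

Lemma div_phi_nondecr x y : (0 < x)%R -> (x <= y)%R -> dom y -> (x / phi x <= y / phi y)%R.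
Proof.
move=> x0 xy dy; have dx := dom_down dy x0 xy.
rewrite ler_pdivrMr ?phi_gt0 // mulrAC ler_pdivlMr ?phi_gt0 //.
by rewrite mulrC [(y * _)%R]mulrC phi_qc.
Qed.

Lemma SphiE g t : Sphi Rb phi g t = ((phi t)^-1)%:E * Mphi Rb phi g t.
Proof. by []. Qed.

Lemma Mphi_le g t B :
  (forall s, (0 < s)%R -> (s < t)%R -> (phi s)%:E * rearr Rb g s <= B) -> Mphi Rb phi g t <= B.
Proof.
move=> gB; apply: ge_ereal_sup => _ [s /= + <-].
by rewrite in_itv /= => /andP[s0 st]; exact: gB.
Qed.

Lemma le_Mphi g s t : (0 < s)%R -> (s < t)%R -> (phi s)%:E * rearr Rb g s <= Mphi Rb phi g t.
Proof. by move=> s0 st; apply: ereal_sup_ubound; exists s; rewrite //= in_itv /= s0. Qed.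

Lemma Mphi_nondecr g s t : (s <= t)%R -> Mphi Rb phi g s <= Mphi Rb phi g t.
Proof.
move=> st; apply: ereal_sup_le => _ [x /= + <-]; rewrite in_itv /= => /andP[x0 xs].
by exists x; rewrite //= in_itv /= x0 (lt_le_trans xs st).
Qed.

Lemma phi_rearr_le_Mphi g t : dom t -> (phi t)%:E * rearr Rb g t <= Mphi Rb phi g t.
Proof.
move=> dt; have [t0 _] := dt.
apply: (@lee_mul_near1 _ 0%R) => //.
  by rewrite mule_ge0 ?rearr_ge0 // lee_fin ltW // phi_gt0.
move=> k /andP[k0 k1]; have kt0 : (0 < k * t)%R by rewrite mulr_gt0.
have ktt : (k * t < t)%R by rewrite gtr_pMl.
apply: le_trans (le_Mphi g _ _ kt0 ktt).
rewrite muleA -EFinM; apply: lee_pmul; rewrite ?rearr_ge0 //.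
- by rewrite lee_fin mulr_ge0 // ltW // phi_gt0.
- by rewrite lee_fin phi_scale // ltW.
- by apply: rearr_nonincr; rewrite ger_pMl // ltW.
Qed.

Lemma Mphi_ge0 g t : dom t -> 0 <= Mphi Rb phi g t.
Proof.
move=> dt; apply: le_trans (phi_rearr_le_Mphi g _ dt).
by rewrite mule_ge0 ?rearr_ge0 // lee_fin ltW // phi_gt0.
Qed.

Lemma Sphi_ge0 g t : dom t -> 0 <= Sphi Rb phi g t.
Proof. by move=> dt; rewrite mule_ge0 ?Mphi_ge0 // lee_fin invr_ge0 ltW // phi_gt0. Qed.

Lemma rearr_le_Mphi g u t : dom t -> (0 < u)%R -> (u <= t)%R ->
  rearr Rb g u <= ((phi u)^-1)%:E * Mphi Rb phi g t.
Proof.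
move=> dt u0 ut; have du := dom_down dt u0 ut.
rewrite lee_pdivlMl ?phi_gt0 //.
exact: le_trans (phi_rearr_le_Mphi g _ du) (Mphi_nondecr g _ _ ut).
Qed.

Lemma rearr_le_Sphi g t : dom t -> rearr Rb g t <= Sphi Rb phi g t.
Proof. by move=> dt; have [t0 _] := dt; exact: rearr_le_Mphi. Qed.

Lemma Sphi_nonincr g s t : (0 < s)%R -> (s <= t)%R -> dom t ->
  Sphi Rb phi g t <= Sphi Rb phi g s.
Proof.
move=> s0 st dt; have ds := dom_down dt s0 st.
have ps := phi_gt0 ds; have pt := phi_gt0 dt.
suff Mst : Mphi Rb phi g t <= (phi t / phi s)%:E * Mphi Rb phi g s.
  by rewrite !SphiE lee_pdivrMl // muleA -EFinM.
apply: Mphi_le => x x0 xt; have [xs|sx] := ltP x s.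
  apply: le_trans (le_Mphi g _ _ x0 xs) _; apply: lee_pemull; first exact: Mphi_ge0.
  by rewrite lee_fin ler_pdivlMr // mul1r (phi_nondecr dt s0).
have dx := dom_down dt x0 (ltW xt).
rewrite EFinM -muleA; apply: lee_pmul.
- by rewrite lee_fin ltW // phi_gt0.
- exact: rearr_ge0.
- by rewrite lee_fin (phi_nondecr dt x0 (ltW xt)).
- exact: le_trans (rearr_nonincr g _ _ sx) (rearr_le_Mphi g _ _ ds s0 (lexx s)).
Qed.

Lemma rearr_Sphi g t : dom t -> rearr Rb (Sphi Rb phi g) t = Sphi Rb phi g t.
Proof.
apply: rearr_id => [x dx|x y x0 xy dy|x y x0 xy dy]; first exact: Sphi_ge0.
  exact: Sphi_nonincr.
have dx := dom_down dy x0 xy.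
rewrite !SphiE !muleA -!EFinM; apply: lee_pmul.
- by rewrite lee_fin divr_ge0 // ltW // phi_gt0.
- exact: Mphi_ge0.
- by rewrite lee_fin div_phi_nondecr.
- exact: Mphi_nondecr.
Qed.

Local Notation J t := (\int[mu]_(u in `]0%R, t[) ((phi u)^-1)%:E).

Lemma inv_phi_ge0 u : dom u -> 0 <= ((phi u)^-1)%:E.
Proof. by move=> du; rewrite lee_fin invr_ge0 ltW // phi_gt0. Qed.

Lemma measurable_inv_phi : measurable_fun dom inv_phi.
Proof.
apply: nonincreasing_measurable_in; first exact: dom_is_interval.
move=> x y dx dy xy; rewrite lee_fin lef_pV2 ?posrE ?phi_gt0 //.
by apply: phi_nondecr dy _ xy; case: dx.
Qed.

Lemma measurable_inv_phi_itv t : dom t -> measurable_fun `]0%R, t[ inv_phi.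
Proof.
by move=> dt; exact: measurable_funS measurable_dom (itv_sub_dom dt) measurable_inv_phi.
Qed.

Lemma int_rearr_le g (v : R) s : (0 <= v)%R -> dom s ->
  (forall u, (0 < u)%R -> (u < s)%R -> rearr Rb g u <= ((phi u)^-1)%:E * v%:E) ->
  int_rearr Rb g s <= v%:E * J s.
Proof.
move=> v0 ds gv; have mJ := measurable_inv_phi_itv _ ds.
have J0 u : `]0%R, s[%classic u -> 0 <= ((phi u)^-1)%:E.
  by move/(itv_sub_dom ds); exact: inv_phi_ge0.
rewrite -ge0_integralZl_EFin //; apply: ge0_le_integral => //.
- by move=> u _; exact: rearr_ge0.
- exact: measurable_rearr.
- exact: measurable_funeM.
- by move=> u; rewrite /= in_itv /= => /andP[u0 us]; rewrite muleC; exact: gv.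
Qed.

Lemma Sphi_le_Sphi_dstar g t : dom t -> Sphi Rb phi g t <= Sphi Rb phi (dstar Rb g) t.
Proof.
move=> dt; apply: lee_wpmul2l; first exact: inv_phi_ge0.
apply: Mphi_le => s s0 st; have ds := dom_down dt s0 (ltW st).
apply: le_trans (le_Mphi _ _ _ s0 st).
apply: lee_wpmul2l; first by rewrite lee_fin ltW // phi_gt0.
by rewrite rearr_dstar // rearr_le_dstar.
Qed.

Section B_condition_sufficient.
Variable C : R.
Hypothesis C0 : (0 < C)%R.
Hypothesis HB : forall t, dom t -> (t^-1)%:E * J t <= (C / phi t)%:E.

Lemma dstar_le_Bcond g (v : R) s : (0 <= v)%R -> dom s ->
  (forall u, (0 < u)%R -> (u < s)%R -> rearr Rb g u <= ((phi u)^-1)%:E * v%:E) ->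
  dstar Rb g s <= ((phi s)^-1)%:E * (C%:E * v%:E).
Proof.
move=> v0 ds gv; have [s0 _] := ds.
rewrite dstarE; apply: le_trans (lee_wpmul2l _ (int_rearr_le _ _ _ v0 ds gv)) _.
  by rewrite lee_fin invr_ge0 ltW.
rewrite muleCA; apply: le_trans (lee_wpmul2l _ (HB _ ds)) _; first by rewrite lee_fin.
by rewrite -!EFinM lee_fin le_eqVlt; apply/predU1P; left; ring.
Qed.

Lemma Sphi_dstar_le g t : dom t -> Sphi Rb phi (dstar Rb g) t <= C%:E * Sphi Rb phi g t.
Proof.
move=> dt; rewrite !SphiE muleCA; apply: lee_wpmul2l; first exact: inv_phi_ge0.
have := Mphi_ge0 g _ dt; case Mg : (Mphi Rb phi g t) => [v| |] // v0; last first.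
  by rewrite gt0_muley ?leey // lte_fin.
apply: Mphi_le => s s0 st; have ds := dom_down dt s0 (ltW st).
rewrite rearr_dstar // -lee_pdivlMl ?phi_gt0 //; apply: dstar_le_Bcond => // u u0 us.
by rewrite -Mg; apply: rearr_le_Mphi => //; exact: ltW (lt_trans us st).
Qed.

Lemma dstar_Sphi_le g t : dom t ->
  dstar Rb (Sphi Rb phi g) t <= C%:E * Sphi Rb phi (dstar Rb g) t.
Proof.
move=> dt; apply: le_trans (_ : _ <= C%:E * Sphi Rb phi g t) _; last first.
  by apply: lee_wpmul2l; [rewrite lee_fin ltW | exact: Sphi_le_Sphi_dstar].
have := Mphi_ge0 g _ dt; rewrite SphiE.
case Mg : (Mphi Rb phi g t) => [v| |] // v0; last first.
  by rewrite gt0_muley ?lte_fin ?invr_gt0 ?phi_gt0 // gt0_muley ?leey // lte_fin.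
rewrite muleCA; apply: dstar_le_Bcond => // u u0 ut; have du := dom_down dt u0 (ltW ut).
rewrite rearr_Sphi // SphiE -Mg; apply: lee_wpmul2l; first exact: inv_phi_ge0.
exact: Mphi_nondecr (ltW ut).
Qed.

End B_condition_sufficient.

Lemma admissible_inv_phi : admissible Rb inv_phi.
Proof. by split; [exact: measurable_inv_phi | apply: aeW]. Qed.

Lemma rearr_inv_phi u : dom u -> rearr Rb inv_phi u = inv_phi u.
Proof.
apply: rearr_id => [x dx|x y x0 xy dy|x y x0 xy dy]; first exact: inv_phi_ge0.
  have dx := dom_down dy x0 xy.
  by rewrite lee_fin lef_pV2 ?posrE ?phi_gt0 // phi_nondecr.
by rewrite -!EFinM lee_fin div_phi_nondecr.
Qed.

Lemma dstar_inv_phi t : dom t -> dstar Rb inv_phi t = (t^-1)%:E * J t.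
Proof.
move=> dt; rewrite dstarE /int_rearr; congr (_ * _); apply: eq_integral => u.
by move=> /set_mem /(itv_sub_dom dt) du; rewrite rearr_inv_phi.
Qed.

Lemma Sphi_inv_phi_le t : dom t -> Sphi Rb phi inv_phi t <= inv_phi t.
Proof.
move=> dt; rewrite SphiE -[X in _ <= X]mule1; apply: lee_wpmul2l; first exact: inv_phi_ge0.
apply: Mphi_le => s s0 st; have ds := dom_down dt s0 (ltW st).
by rewrite rearr_inv_phi // -EFinM mulfV // gt_eqF // phi_gt0.
Qed.

Lemma Bcond_of_Sphi_dstar_le C : (0 <= C)%R ->
  (forall f, admissible Rb f -> forall t, dom t ->
     Sphi Rb phi (dstar Rb f) t <= C%:E * Sphi Rb phi f t) ->
  forall t, dom t -> (t^-1)%:E * J t <= (C / phi t)%:E.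
Proof.
move=> C0 H t dt; rewrite -dstar_inv_phi // -rearr_dstar //.
apply: le_trans (rearr_le_Sphi _ _ dt) _.
apply: le_trans (H _ admissible_inv_phi _ dt) _.
by rewrite EFinM; apply: lee_wpmul2l (Sphi_inv_phi_le _ dt); rewrite lee_fin.
Qed.

Section indicator.
Variable a : R.
Hypothesis da : dom a.

Let chi x : \bar R := (if (0 < x < a)%R then 1 else 0)%:E.

Lemma admissible_chi : admissible Rb chi.
Proof.
split; last by apply: aeW => x _; rewrite /chi; case: ifP.
apply: nonincreasing_measurable_in; first exact: dom_is_interval.
move=> x y [x0 _] [y0 _] xy; rewrite /chi x0 y0 /=.
by case: (ltP y a) => ya; [rewrite (le_lt_trans xy ya) | case: ifP].
Qed.

Lemma rearr_chi_le1 s : (0 < s)%R -> rearr Rb chi s <= 1.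
Proof.
by move=> s0; apply: rearr_le => // x _ _; rewrite /chi; case: ifP; rewrite ?abse1 ?abse0.
Qed.

Lemma rearr_chi_eq0 s : (a <= s)%R -> rearr Rb chi s = 0.
Proof.
move=> as_; have [a0 _] := da.
apply/le_anti; rewrite rearr_ge0 andbT; apply: rearr_le => //; first exact: lt_le_trans as_.
move=> x _ sx; rewrite /chi; case: ifP => [/andP[_ xa]|_]; last by rewrite abse0.
by move: (le_lt_trans (le_trans as_ sx) xa); rewrite ltxx.
Qed.

Lemma rearr_chi_ge1 s : (0 <= s)%R -> (s < a)%R -> 1 <= rearr Rb chi s.
Proof.
move=> s0 sa; apply: (@rearr_ge _ _ chi s a) => //; first by case: da => _ /ltW.
by move=> x x0 xa; rewrite /chi x0 xa abse1.
Qed.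

Lemma int_rearr_chi_le_id s : (0 < s)%R -> int_rearr Rb chi s <= s%:E.
Proof.
move=> s0; apply: le_trans (_ : _ <= \int[mu]_(u in `]0%R, s[) cst 1 u) _.
  apply: ge0_le_integral => //.
  - by move=> u _; exact: rearr_ge0.
  - exact: measurable_rearr.
  - by move=> u; rewrite /= in_itv /= => /andP[u0 _]; exact: rearr_chi_le1.
have := @lebesgue_measure_itv_bnd_bnd R 0%R s false true (ltW s0).
by rewrite subr0 => <-; rewrite integral_cst // mul1e.
Qed.

Lemma phi_dstar_chi_le s : dom s -> (phi s)%:E * dstar Rb chi s <= (phi a)%:E.
Proof.
move=> ds; have [s0 _] := ds; have [a0 _] := da; have ps := phi_gt0 ds.
rewrite dstarE muleA -EFinM; have [sa|as_] := leP s a.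
  apply: le_trans (lee_wpmul2l _ (int_rearr_chi_le_id _ s0)) _.
    by rewrite lee_fin divr_ge0 ?ltW.
  by rewrite -EFinM lee_fin divfK ?gt_eqF // phi_nondecr.
have Ia : int_rearr Rb chi s <= a%:E.
  apply: le_trans (int_rearr_split _ _ _ a0 (ltW as_)) _.
  by rewrite rearr_chi_eq0 // mule0 adde0 int_rearr_chi_le_id.
apply: le_trans (lee_wpmul2l _ Ia) _; first by rewrite lee_fin divr_ge0 ?ltW.
by rewrite -EFinM lee_fin mulrAC ler_pdivrMr // (phi_qc ds a0 (ltW as_)).
Qed.

Lemma Sphi_dstar_chi_le t : dom t -> Sphi Rb phi (dstar Rb chi) t <= (phi a / phi t)%:E.
Proof.
move=> dt; rewrite SphiE mulrC EFinM; apply: lee_wpmul2l; first exact: inv_phi_ge0.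
apply: Mphi_le => s s0 st; have ds := dom_down dt s0 (ltW st).
by rewrite rearr_dstar //; exact: phi_dstar_chi_le.
Qed.

Lemma phi_le_Mphi_chi : (phi a)%:E <= Mphi Rb phi chi a.
Proof.
have [a0 _] := da; apply: (@lee_mul_near1 _ 0%R) => //; first exact/ltW/phi_gt0.
move=> k /andP[k0 k1]; have ka0 : (0 < k * a)%R by rewrite mulr_gt0.
have kaa : (k * a < a)%R by rewrite gtr_pMl.
apply: le_trans (le_Mphi _ _ _ ka0 kaa); rewrite -EFinM -[X in X <= _]mule1.
apply: lee_pmul => //.
- by rewrite lee_fin mulr_ge0 // ltW // phi_gt0.
- by rewrite lee_fin phi_scale // ltW.
- exact: rearr_chi_ge1 (ltW ka0) kaa.
Qed.

Lemma Sphi_chi_ge u : dom u -> (a <= u)%R -> (phi a / phi u)%:E <= Sphi Rb phi chi u.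
Proof.
move=> du au; rewrite SphiE mulrC EFinM; apply: lee_wpmul2l; first exact: inv_phi_ge0.
exact: le_trans phi_le_Mphi_chi (Mphi_nondecr _ _ _ au).
Qed.

Lemma phi_int_inv_phi_itv_le t : dom t -> (a <= t)%R ->
  (phi a)%:E * \int[mu]_(u in `[a, t[) ((phi u)^-1)%:E <= t%:E * dstar Rb (Sphi Rb phi chi) t.
Proof.
move=> dt at_; have [t0 _] := dt; have [a0 _] := da; have pa := phi_gt0 da.
have sub : `[a, t[%classic `<=` `]0%R, t[%classic by apply: subset_itvr; rewrite bnd_simp.
have J0 u : `[a, t[%classic u -> 0 <= ((phi u)^-1)%:E.
  by move=> /sub /(itv_sub_dom dt); exact: inv_phi_ge0.
have mJ : measurable_fun `[a, t[ inv_phi.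
  exact: measurable_funS (measurable_inv_phi_itv _ dt).
rewrite -ge0_integralZl_EFin ?(ltW pa) // mul_dstar //.
apply: le_trans (_ : _ <= \int[mu]_(u in `[a, t[) rearr Rb (Sphi Rb phi chi) u) _.
  apply: ge0_le_integral => //.
  - by move=> u /J0 Ju; rewrite mule_ge0 // lee_fin ltW.
  - exact: measurable_funeM.
  - exact: measurable_rearr.
  - move=> u; rewrite /= in_itv /= => /andP[au ut].
    have du := dom_down dt (lt_le_trans a0 au) (ltW ut).
    by rewrite rearr_Sphi // -EFinM; exact: Sphi_chi_ge.
apply: ge0_subset_integral => //; first exact: measurable_rearr.
by move=> u _; exact: rearr_ge0.
Qed.

Lemma int_inv_phi_itv_le C t : (0 <= C)%R -> dom t -> (a <= t)%R ->
  dstar Rb (Sphi Rb phi chi) t <= C%:E * Sphi Rb phi (dstar Rb chi) t ->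
  \int[mu]_(u in `[a, t[) ((phi u)^-1)%:E <= (C * t / phi t)%:E.
Proof.
move=> C0 dt at_ H; have [t0 _] := dt; have pa := phi_gt0 da.
rewrite -(@lee_pmul2l _ (phi a)%:E) ?lte_fin //.
apply: le_trans (phi_int_inv_phi_itv_le _ dt at_) _.
apply: le_trans (lee_wpmul2l _ (le_trans H (lee_wpmul2l _ (Sphi_dstar_chi_le _ dt)))) _.
- by rewrite lee_fin ltW.
- by rewrite lee_fin.
by rewrite -!EFinM lee_fin le_eqVlt; apply/predU1P; left; field; rewrite gt_eqF // phi_gt0.
Qed.

End indicator.

Lemma Bcond_of_dstar_Sphi_le C : (0 <= C)%R ->
  (forall f, admissible Rb f -> forall t, dom t ->
     dstar Rb (Sphi Rb phi f) t <= C%:E * Sphi Rb phi (dstar Rb f) t) ->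
  forall t, dom t -> (t^-1)%:E * J t <= (C / phi t)%:E.
Proof.
move=> C0 H t dt; have [t0 _] := dt.
have JB : J t <= (C * t / phi t)%:E.
  apply: ge0_integral_itv_oo_ub => //; first exact: measurable_inv_phi_itv.
    by move=> u /(itv_sub_dom dt); exact: inv_phi_ge0.
  move=> a a0 at_; have da := dom_down dt a0 (ltW at_).
  exact: (int_inv_phi_itv_le _ da _ _ C0 dt (ltW at_) (H _ (admissible_chi a) t dt)).
rewrite lee_pdivrMl //; apply: le_trans JB _.
by rewrite -EFinM lee_fin mulrA (mulrC t).
Qed.

End quasiconcave_phi.

Theorem lemma4p2 (R : realType) (Rb : \bar R) (phi : R -> R) :
  0 < Rb -> quasiconcave Rb phi ->
  ((exists C : R, (0 < C)%R /\
      forall f : R -> \bar R, admissible Rb f ->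
      forall t : R, dom Rb t ->
        dstar Rb (Sphi Rb phi f) t <= C%:E * Sphi Rb phi (dstar Rb f) t)
     <-> Bcond Rb phi)
  /\
  ((exists C : R, (0 < C)%R /\
      forall f : R -> \bar R, admissible Rb f ->
      forall t : R, dom Rb t ->
        Sphi Rb phi (dstar Rb f) t <= C%:E * Sphi Rb phi f t)
     <-> Bcond Rb phi).
Proof.
move=> _ qc; split; split.
- move=> [C [C0 H]]; exists C; split => //; exact: Bcond_of_dstar_Sphi_le qc _ (ltW C0) H.
- by move=> [C [C0 HB]]; exists C; split => // f _ t; exact: dstar_Sphi_le qc C C0 HB f t.
- move=> [C [C0 H]]; exists C; split => //; exact: Bcond_of_Sphi_dstar_le qc _ (ltW C0) H.
- by move=> [C [C0 HB]]; exists C; split => // f _ t; exact: Sphi_dstar_le qc C C0 HB f t.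
Qed.
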